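(* Let $N\ge 2$, $\lambda$ a parameter, and for $x,p\in\mathbb{C}^N$ set $$L_k(x,p;\lambda)=\begin{pmatrix}\lambda+e^{p_k} & e^{x_k}\\ \lambda e^{-x_k} & 1\end{pmatrix},\qquad T_N(x,p;\lambda)=L_N(x,p;\lambda)\cdots L_1(x,p;\lambda).$$ (a) Periodic case: if $\widetilde{x}\in\mathbb{C}^N$ satisfies $e^{p_k}=\big(e^{\widetilde{x}_k-x_k}-1\big)\big(\lambda+e^{x_k-\widetilde{x}_{k-1}}\big)$ for $k=1,\dots,N$ with $\widetilde x_0=\widetilde x_N$, $x_{N+1}=x_1$, then $P(x,\widetilde{x})=\prod_{k=1}^N\big(1+\lambda e^{\widetilde{x}_k-x_{k+1}}\big)$ is an eigenvalue of $T_N(x,p;\lambda)$. (b) Open-end case: if $\widetilde{x}\in\mathbb{C}^N$ satisfies $e^{p_1}=\lambda\big(e^{\widetilde{x}_1-x_1}-1\big)$ and $e^{p_k}=\big(e^{\widetilde{x}_k-x_k}-1\big)\big(\lambda+e^{x_k-\widetilde{x}_{k-1}}\big)$ for $k=2,\dots,N$, then the $(1,1)$-entry of $T_N(x,p;\lambda)$ equals $\lambda P(x,\widetilde{x})$, where $P(x,\widetilde{x})=e^{\widetilde{x}_N-x_1}\prod_{k=1}^{N-1}\big(1+\lambda e^{\widetilde{x}_k-x_{k+1}}\big)$.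
   Context: The relation between $(x,p)$ and $\widetilde x$ is the first half of the Bäcklund transformation $F_\lambda$ of the modified Toda lattice $\ddot x_k=\dot x_k(e^{x_{k+1}-x_k}-e^{x_k-x_{k-1}})$, with periodic resp. open-end ($x_0=+\infty$, $x_{N+1}=-\infty$) boundary conditions. *)

From Stdlib Require Import Reals.
From Coquelicot Require Import Coquelicot.
Open Scope C_scope.

Definition Cexp (z : C) : C :=
  (exp (Re z) * cos (Im z), exp (Re z) * sin (Im z))%R.

Record M2 := mkM2 { m11 : C; m12 : C; m21 : C; m22 : C }.

Definition M2mul (A B : M2) : M2 :=
  mkM2 (m11 A * m11 B + m12 A * m21 B) (m11 A * m12 B + m12 A * m22 B)
       (m21 A * m11 B + m22 A * m21 B) (m21 A * m12 B + m22 A * m22 B).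

Definition M2id : M2 := mkM2 1 0 0 1.

(* Lax matrix L_k(x,p;lambda); sequences are indexed 1..N *)
Definition Lax (x p : nat -> C) (lam : C) (k : nat) : M2 :=
  mkM2 (lam + Cexp (p k)) (Cexp (x k)) (lam * Cexp (- x k)) 1.

Fixpoint monodromy (x p : nat -> C) (lam : C) (n : nat) : M2 :=
  match n with
  | O => M2id
  | S m => M2mul (Lax x p lam (S m)) (monodromy x p lam m)
  end.

Definition is_eigenvalue (A : M2) (mu : C) : Prop :=
  exists v1 v2 : C, (v1 <> 0 \/ v2 <> 0) /\
    m11 A * v1 + m12 A * v2 = mu * v1 /\
    m21 A * v1 + m22 A * v2 = mu * v2.

Fixpoint Cprod1 (n : nat) (f : nat -> C) : C :=
  match n with
  | O => 1
  | S m => Cprod1 m f * f (S m)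
  end.

From Stdlib Require Import Reals Lia.
From Coquelicot Require Import Coquelicot.
Open Scope C_scope.

(* Write y_k = e^{xt_k}.  The Bäcklund relation for p_k says exactly that
   L_k maps (y_{k-1}, 1) to (1 + lam y_{k-1} e^{-x_k}) (y_k, 1), so chaining
   through T_N = L_N ... L_1 gives T_N (y_0, 1) = (product of the factors) (y_N, 1).
   In the periodic case y_0 = y_N, so (y_N, 1) is an eigenvector, and the
   product is P(x, xt) after a cyclic reindexing.  In the open-end case one
   starts instead from (1, 0), which L_1 sends to lam e^{-x_1} (y_1, 1); the first
   component of T_N (1, 0) is the (1,1)-entry. *)

Lemma Cexp_add (a b : C) : Cexp (a + b) = Cexp a * Cexp b.
Proof.
  destruct a as [a1 a2], b as [b1 b2]; unfold Cexp; simpl.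
  rewrite exp_plus, cos_plus, sin_plus.
  apply injective_projections; simpl; ring.
Qed.

Lemma Cexp_0 : Cexp 0 = 1.
Proof.
  unfold Cexp; simpl; rewrite exp_0, cos_0, sin_0.
  apply injective_projections; simpl; ring.
Qed.

Lemma Cexp_opp_l (a : C) : Cexp (- a) * Cexp a = 1.
Proof. rewrite <- Cexp_add, <- Cexp_0; f_equal; ring. Qed.

Lemma Cexp_neq0 (a : C) : Cexp a <> 0.
Proof.
  intro Ha; apply C1_nz.
  rewrite <- (Cexp_opp_l a), Ha; ring.
Qed.

Lemma Cexp_opp (a : C) : Cexp (- a) = / Cexp a.
Proof.
  rewrite <- (Cmult_1_l (/ Cexp a)), <- (Cexp_opp_l a).
  field; apply Cexp_neq0.
Qed.

Lemma Cexp_sub (a b : C) : Cexp (a - b) = Cexp a / Cexp b.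
Proof. unfold Cminus; rewrite Cexp_add, Cexp_opp; reflexivity. Qed.

Lemma Cprod1_S_l (n : nat) (f : nat -> C) :
  Cprod1 (S n) f = f 1%nat * Cprod1 n (fun k => f (S k)).
Proof.
  induction n as [|n IH]; [simpl; ring|].
  change (Cprod1 (S (S n)) f) with (Cprod1 (S n) f * f (S (S n))).
  rewrite IH; simpl; ring.
Qed.

Lemma Cprod1_ext (n : nat) (f g : nat -> C) :
  (forall k, (1 <= k <= n)%nat -> f k = g k) -> Cprod1 n f = Cprod1 n g.
Proof.
  induction n as [|n IH]; intros Hfg; simpl; [reflexivity|].
  rewrite IH, Hfg; [reflexivity | lia | intros; apply Hfg; lia].
Qed.

Lemma Cprod1_rotate (n : nat) (h : nat -> C) :
  Cprod1 n (fun k => h (if Nat.eqb k 1 then n else (k - 1)%nat)) = Cprod1 n h.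
Proof.
  destruct n as [|n]; [reflexivity|].
  rewrite Cprod1_S_l; simpl.
  rewrite (Cprod1_ext n _ h) by (intros [|k] Hk; [lia | reflexivity]).
  ring.
Qed.

Definition M2app (A : M2) (u : C * C) : C * C :=
  (m11 A * fst u + m12 A * snd u, m21 A * fst u + m22 A * snd u).

Definition Cscal (c : C) (u : C * C) : C * C := (c * fst u, c * snd u).

Lemma M2app_mul (A B : M2) (u : C * C) :
  M2app (M2mul A B) u = M2app A (M2app B u).
Proof. apply injective_projections; simpl; ring. Qed.

Lemma M2app_scal (A : M2) (c : C) (u : C * C) :
  M2app A (Cscal c u) = Cscal c (M2app A u).
Proof. apply injective_projections; simpl; ring. Qed.

Lemma is_eigenvalue_M2app (A : M2) (mu : C) (u : C * C) :
  snd u <> 0 -> M2app A u = Cscal mu u -> is_eigenvalue A mu.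
Proof.
  intros Hu HAu; exists (fst u), (snd u); split; [now right|].
  split; [exact (f_equal fst HAu) | exact (f_equal snd HAu)].
Qed.

Lemma monodromy_chain (x p : nat -> C) (lam : C) (n : nat)
    (u : nat -> C * C) (c : nat -> C) :
  (forall k, (1 <= k <= n)%nat ->
     M2app (Lax x p lam k) (u (k - 1)%nat) = Cscal (c k) (u k)) ->
  M2app (monodromy x p lam n) (u 0%nat) = Cscal (Cprod1 n c) (u n).
Proof.
  induction n as [|n IH]; intros Hstep; cbn [monodromy Cprod1].
  - apply injective_projections; simpl; ring.
  - rewrite M2app_mul, IH by (intros; apply Hstep; lia).
    rewrite M2app_scal.
    specialize (Hstep (S n) ltac:(lia)); simpl in Hstep; rewrite Nat.sub_0_r in Hstep.
    rewrite Hstep; apply injective_projections; simpl; ring.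
Qed.

Lemma Lax_backlund_step (x p xt : nat -> C) (lam z : C) (k : nat) :
  Cexp (p k) = (Cexp (xt k - x k) - 1) * (lam + Cexp (x k - z)) ->
  M2app (Lax x p lam k) (Cexp z, 1 : C)
  = Cscal (1 + lam * Cexp (z - x k)) (Cexp (xt k), 1 : C).
Proof.
  intros Hp; pose proof (Cexp_neq0 (x k)); pose proof (Cexp_neq0 z).
  unfold M2app, Cscal, Lax; simpl.
  rewrite Hp, !Cexp_sub, Cexp_opp.
  apply injective_projections; simpl; field; auto.
Qed.

Lemma Lax_open_end_step (x p xt : nat -> C) (lam : C) :
  Cexp (p 1%nat) = lam * (Cexp (xt 1%nat - x 1%nat) - 1) ->
  M2app (Lax x p lam 1) (1 : C, 0 : C) = Cscal (lam / Cexp (x 1%nat)) (Cexp (xt 1%nat), 1 : C).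
Proof.
  intros Hp; pose proof (Cexp_neq0 (x 1%nat)).
  unfold M2app, Cscal, Lax; simpl.
  rewrite Hp, Cexp_sub, Cexp_opp.
  apply injective_projections; simpl; field; auto.
Qed.

Lemma monodromy_periodic_eigenvalue (N : nat) (lam : C) (x p xt : nat -> C) :
  (forall k : nat, (1 <= k <= N)%nat ->
      Cexp (p k) = (Cexp (xt k - x k) - 1) *
        (lam + Cexp (x k - (if Nat.eqb k 1 then xt N else xt (k - 1)%nat)))) ->
  is_eigenvalue (monodromy x p lam N)
    (Cprod1 N (fun k => 1 + lam * Cexp (xt k -
       (if Nat.eqb k N then x 1%nat else x (k + 1)%nat)))).
Proof.
  intros Hp.
  set (u := fun k => (Cexp (xt (if Nat.eqb k 0 then N else k)), 1 : C)).
  apply (is_eigenvalue_M2app _ _ (u N)); [apply C1_nz|].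
  rewrite <- Cprod1_rotate.
  replace (u N) with (u 0%nat) at 1 by (unfold u; now destruct (Nat.eqb N 0)).
  apply monodromy_chain; intros k Hk.
  replace (u k) with (Cexp (xt k), 1 : C) by (unfold u; now destruct (Nat.eqb_spec k 0); [lia|]).
  unfold u; destruct (Nat.eqb_spec k 1) as [->|Hk1]; simpl.
  - rewrite Nat.eqb_refl; apply Lax_backlund_step, (Hp 1%nat Hk).
  - replace (Nat.eqb (k - 1) 0) with false by (symmetry; apply Nat.eqb_neq; lia).
    replace (Nat.eqb (k - 1) N) with false by (symmetry; apply Nat.eqb_neq; lia).
    replace (k - 1 + 1)%nat with k by lia.
    apply Lax_backlund_step.
    specialize (Hp k Hk); rewrite (proj2 (Nat.eqb_neq k 1) Hk1) in Hp; exact Hp.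
Qed.

Lemma monodromy_open_end_m11 (N : nat) (HN : (1 <= N)%nat) (lam : C) (x p xt : nat -> C) :
  (Cexp (p 1%nat) = lam * (Cexp (xt 1%nat - x 1%nat) - 1) /\
   forall k : nat, (2 <= k <= N)%nat ->
     Cexp (p k) = (Cexp (xt k - x k) - 1) * (lam + Cexp (x k - xt (k - 1)%nat))) ->
  m11 (monodromy x p lam N) =
    lam * (Cexp (xt N - x 1%nat) *
           Cprod1 (N - 1) (fun k => 1 + lam * Cexp (xt k - x (k + 1)%nat))).
Proof.
  intros [Hp1 Hp].
  set (u := fun k => if Nat.eqb k 0 then (1 : C, 0 : C) else (Cexp (xt k), 1 : C)).
  set (c := fun k => if Nat.eqb k 1 then lam / Cexp (x 1%nat)
                     else 1 + lam * Cexp (xt (k - 1)%nat - x k)).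
  assert (HT : M2app (monodromy x p lam N) (u 0%nat) = Cscal (Cprod1 N c) (u N)).
  { apply monodromy_chain; intros k Hk; unfold u, c.
    destruct (Nat.eqb_spec k 1) as [->|Hk1]; simpl.
    - exact (Lax_open_end_step x p xt lam Hp1).
    - replace (Nat.eqb (k - 1) 0) with false by (symmetry; apply Nat.eqb_neq; lia).
      replace (Nat.eqb k 0) with false by (symmetry; apply Nat.eqb_neq; lia).
      apply Lax_backlund_step, Hp; lia. }
  destruct N as [|N]; [lia|].
  apply (f_equal fst) in HT; unfold u in HT; cbn [Nat.eqb fst snd Cscal M2app] in HT.
  rewrite Cprod1_S_l in HT.
  rewrite (Cprod1_ext N _ (fun k => 1 + lam * Cexp (xt k - x (k + 1)%nat))) in HT
    by (intros [|k] Hk; [lia | unfold c; simpl; now rewrite Nat.add_1_r]).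
  unfold c in HT; cbn [Nat.eqb] in HT.
  replace (S N - 1)%nat with N by lia.
  rewrite Cexp_sub; pose proof (Cexp_neq0 (x 1%nat)).
  transitivity (m11 (monodromy x p lam (S N)) * 1 + m12 (monodromy x p lam (S N)) * 0);
    [ring | rewrite HT; field; auto].
Qed.

Theorem theorem9 (N : nat) (HN : (2 <= N)%nat) (lam : C) (x p xt : nat -> C) :
  ((forall k : nat, (1 <= k <= N)%nat ->
      Cexp (p k) = (Cexp (xt k - x k) - 1) *
        (lam + Cexp (x k - (if Nat.eqb k 1 then xt N else xt (k - 1)%nat)))) ->
   is_eigenvalue (monodromy x p lam N)
     (Cprod1 N (fun k => 1 + lam * Cexp (xt k -
        (if Nat.eqb k N then x 1%nat else x (k + 1)%nat)))))
  /\
  ((Cexp (p 1%nat) = lam * (Cexp (xt 1%nat - x 1%nat) - 1) /\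
    forall k : nat, (2 <= k <= N)%nat ->
      Cexp (p k) = (Cexp (xt k - x k) - 1) *
        (lam + Cexp (x k - xt (k - 1)%nat))) ->
   m11 (monodromy x p lam N) =
     lam * (Cexp (xt N - x 1%nat) *
            Cprod1 (N - 1) (fun k => 1 + lam * Cexp (xt k - x (k + 1)%nat)))).
Proof.
  split.
  - apply monodromy_periodic_eigenvalue.
  - apply monodromy_open_end_m11; lia.
Qed.
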